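(* Let $A\in\mathbb{R}^{n\times n}$ be monotone and let $A=P_1-R_1+S_1=P_2-R_2+S_2$ be two double weak regular splittings of $A$. Suppose $A=P_3-R_3+S_3$ is a double regular splitting with $1\notin\sigma(S_3P_i^{-1})$ and $\widehat{A}_i^{-1}\geq 0$ for $i=1,2$, where $\widehat{A}_i=(I-S_3P_i^{-1})A$. Let $\widehat{P}_i=P_3$ and $\widehat{R}_i=R_3-S_3P_i^{-1}R_i$. If $\widehat{P}_1^{-1}\widehat{A}_1\geq\widehat{P}_2^{-1}\widehat{A}_2$ and $\widehat{P}_1^{-1}\widehat{R}_1\geq\widehat{P}_2^{-1}\widehat{R}_2$, then $\rho(W_{13})\leq\rho(W_{23})<1$, where for $i=1,2$ $$W_{i3}=\begin{pmatrix} P_3^{-1}R_3-P_3^{-1}S_3P_i^{-1}R_i & P_3^{-1}S_3P_i^{-1}S_i\\ I & 0\end{pmatrix}.$$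
   Context: Inequalities are entrywise; $\rho$ is the spectral radius, $\sigma$ the spectrum. $A$ is monotone if $A$ is nonsingular and $A^{-1}\geq 0$. A double splitting $A=P-R+S$ with $P$ nonsingular is a double regular splitting if $P^{-1}\geq0$, $R\geq0$, $S\leq0$, and a double weak regular splitting if $P^{-1}\geq 0$, $P^{-1}R\geq0$, $P^{-1}S\leq0$. *)

From HB Require Import structures.
From mathcomp Require Import all_boot all_order all_algebra.
From mathcomp Require Import classical_sets reals.
From mathcomp.real_closed Require Import complex.
Set Implicit Arguments. Unset Strict Implicit. Unset Printing Implicit Defensive.
Import Order.TTheory GRing.Theory Num.Theory.
Local Open Scope ring_scope.
Local Open Scope classical_set_scope.

Definition mx_ge0 (R : realType) m n (A : 'M[R]_(m, n)) : Prop :=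
  forall i j, 0 <= A i j.
Definition mx_le0 (R : realType) m n (A : 'M[R]_(m, n)) : Prop :=
  forall i j, A i j <= 0.
Definition mx_ge (R : realType) m n (A B : 'M[R]_(m, n)) : Prop :=
  forall i j, B i j <= A i j.

Definition monotone (R : realType) n (A : 'M[R]_n) : Prop :=
  A \in unitmx /\ mx_ge0 (invmx A).

Definition spectrum (R : realType) n (A : 'M[R]_n) : set R[i] :=
  [set l : R[i] | eigenvalue (map_mx (fun x : R => (x%:C)%C) A) l].

Definition spectral_radius (R : realType) n (A : 'M[R]_n) : R :=
  sup [set ComplexField.Normc.normc l | l in spectrum A].

Definition double_weak_regular_splitting (R : realType) n
    (A P Rm S : 'M[R]_n) : Prop :=
  [/\ A = P - Rm + S, P \in unitmx, mx_ge0 (invmx P),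
      mx_ge0 (invmx P *m Rm) & mx_le0 (invmx P *m S)].

Definition double_regular_splitting (R : realType) n
    (A P Rm S : 'M[R]_n) : Prop :=
  [/\ A = P - Rm + S, P \in unitmx, mx_ge0 (invmx P),
      mx_ge0 Rm & mx_le0 S].

Definition Ahat (R : realType) n (A Pi S3 : 'M[R]_n) : 'M[R]_n :=
  (1%:M - S3 *m invmx Pi) *m A.

Definition Rhat (R : realType) n (Pi Ri R3 S3 : 'M[R]_n) : 'M[R]_n :=
  R3 - S3 *m invmx Pi *m Ri.

Definition W (R : realType) n (Pi Ri Si P3 R3 S3 : 'M[R]_n) : 'M[R]_(n + n) :=
  block_mx (invmx P3 *m R3 - invmx P3 *m S3 *m invmx Pi *m Ri)
           (invmx P3 *m S3 *m invmx Pi *m Si)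
           1%:M 0.

From HB Require Import structures.
From mathcomp Require Import all_boot all_order all_algebra.
From mathcomp Require Import classical_sets reals boolp.
From mathcomp.real_closed Require Import complex.
From mathcomp Require Import ring lra.
Set Implicit Arguments. Unset Strict Implicit. Unset Printing Implicit Defensive.
Import Order.TTheory GRing.Theory Num.Theory.
Local Open Scope ring_scope.
Local Open Scope classical_set_scope.

(* Write W_i3 = [B_i C_i; I 0] with B_i = P3^-1 Rhat_i and C_i = P3^-1 S3 P_i^-1 S_i,
   both nonnegative, so that P3^-1 Ahat_i = I - B_i - C_i.  A row eigenvector
   (v1, v2) of W_i3 for l gives v1 (l B_i + C_i) = l^2 v1, so y = |v1| is a
   nonnegative nonzero row with r^2 y <= y (r B_i + C_i), where r = |l|.
   If r >= 1 this forces (y P3^-1) Ahat_i <= 0, impossible since Ahat_i is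
   monotone: hence rho(W_i3) < 1.  For i = 1 and r < 1 the two comparison
   hypotheses give r B_1 + C_1 <= r B_2 + C_2, so (y, r^-1 y C_2) is a
   nonnegative r-subinvariant row of W_23, and the Collatz-Wielandt lower
   bound yields rho(W_23) >= r.  That bound is proved with M-matrices: the
   shifts t I - M admitting x > 0 with x (t I - M) > 0 all lie above r, and
   their infimum is a real eigenvalue of M. *)

Section NonnegativeMatrices.
Variable R : realType.

Lemma mulmx_ge0 k m p (X : 'M[R]_(k, m)) (Y : 'M[R]_(m, p)) :
  mx_ge0 X -> mx_ge0 Y -> mx_ge0 (X *m Y).
Proof. by move=> X0 Y0 i j; rewrite mxE; apply: sumr_ge0 => l _; apply: mulr_ge0. Qed.

Lemma mulmx_le0_ge0 k m p (X : 'M[R]_(k, m)) (Y : 'M[R]_(m, p)) :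
  mx_le0 X -> mx_ge0 Y -> mx_le0 (X *m Y).
Proof. by move=> X0 Y0 i j; rewrite mxE; apply: sumr_le0 => l _; apply: mulr_le0_ge0. Qed.

Lemma mulmx_ge0_le0 k m p (X : 'M[R]_(k, m)) (Y : 'M[R]_(m, p)) :
  mx_ge0 X -> mx_le0 Y -> mx_le0 (X *m Y).
Proof. by move=> X0 Y0 i j; rewrite mxE; apply: sumr_le0 => l _; apply: mulr_ge0_le0. Qed.

Lemma mulmx_le0 k m p (X : 'M[R]_(k, m)) (Y : 'M[R]_(m, p)) :
  mx_le0 X -> mx_le0 Y -> mx_ge0 (X *m Y).
Proof. by move=> X0 Y0 i j; rewrite mxE; apply: sumr_ge0 => l _; apply: mulr_le0. Qed.

Lemma monotone_row_le0 k (B : 'M[R]_k) (u : 'rV[R]_k) :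
  monotone B -> mx_ge0 u -> mx_le0 (u *m B) -> u = 0.
Proof.
move=> [Bu B0] u0 uB; apply/matrixP => i j; rewrite mxE.
by apply/eqP; rewrite eq_le u0 andbT -[u](mulmxK Bu) mulmx_le0_ge0.
Qed.

Lemma fixpoint_row_sum_le k (K : 'M[R]_k) (w : 'rV[R]_k) h b :
  0 <= h -> mx_ge0 w -> w = (const_mx 1 - h *: w) *m K ->
  \sum_i \sum_j `|K i j| <= b -> 2 * h * b <= 1 -> \sum_i w 0 i <= 2 * b.
Proof.
move=> h0 w0 wK Kb hb; set s := \sum_i w 0 i.
have s0 : 0 <= s by apply: sumr_ge0 => i _; apply: w0.
have ws i : w 0 i <= s by rewrite /s (bigD1 i) //= lerDl sumr_ge0.
have b0 : 0 <= b by apply: le_trans Kb; do 2![apply: sumr_ge0 => ? _].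
have : s <= (1 + h * s) * b.
  rewrite {1}/s wK (eq_bigr (fun j => \sum_i (1 - h * w 0 i) * K i j)); last first.
    by move=> j _; rewrite !mxE; apply: eq_bigr => i _; rewrite !mxE.
  rewrite exchange_big /=; apply: le_trans (ler_wpM2l _ Kb); last first.
    by rewrite addr_ge0 ?mulr_ge0.
  rewrite mulr_sumr; apply: ler_sum => i _; rewrite mulr_sumr; apply: ler_sum => j _.
  apply: le_trans (ler_norm _) _; rewrite normrM ler_wpM2r //.
  apply: le_trans (ler_normB _ _) _.
  by rewrite normr1 normrM !ger0_norm // lerD2l ler_wpM2l.
nra.
Qed.

End NonnegativeMatrices.

Section ZMatrices.
Variables (R : realType) (k : nat).
Implicit Types (Z : 'M[R]_k) (w : 'rV[R]_k).

Definition mx_gt0 m n (A : 'M[R]_(m, n)) : Prop := forall i j, 0 < A i j.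

Definition Zmatrix Z : Prop := forall i j, i != j -> Z i j <= 0.

Definition row_semipositive Z : Prop :=
  exists2 x : 'rV[R]_k, mx_gt0 x & mx_gt0 (x *m Z).

Lemma Zmatrix_semipos_ge0 Z w :
  Zmatrix Z -> row_semipositive Z -> mx_ge0 (w *m Z) -> mx_ge0 w.
Proof.
move=> Zoff [x x0 xZ0] wZ0 i0 i; rewrite [i0]ord1 leNgt; apply/negP => wi0.
(* With c = min_l w_l / x_l < 0 attained at j, c x <= w with equality at j;
   as Z is off-diagonally nonpositive, (w Z)_j <= c (x Z)_j < 0. *)
pose j := [arg min_(l < i) (w 0 l / x 0 l)]%O.
have cmin l : w 0 j / x 0 j <= w 0 l / x 0 l.
  by rewrite /j; case: Order.TotalTheory.arg_minP => // j' _; apply.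
set c := w 0 j / x 0 j in cmin.
have c_lt0 : c < 0 by apply: le_lt_trans (cmin i) _; rewrite pmulr_llt0 ?invr_gt0.
have : (w *m Z) 0 j <= c * (x *m Z) 0 j.
  rewrite !mxE mulr_sumr; apply: ler_sum => l _; rewrite mulrA.
  have [->|lj] := eqVneq l j; first by rewrite /c divfK ?(gt_eqF (x0 0 j)).
  by rewrite ler_wnM2r ?Zoff // -ler_pdivlMr.
by move/(le_trans (wZ0 0 j)); rewrite pmulr_lge0 // leNgt c_lt0.
Qed.

Lemma Zmatrix_semipos_unit Z : Zmatrix Z -> row_semipositive Z -> Z \in unitmx.
Proof.
move=> Zoff Zpos.
have ker0 w : w *m Z = 0 -> w = 0.
  move=> wZ; have ge0 w' : w' *m Z = 0 -> mx_ge0 w'.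
    by move=> w'Z; apply: (Zmatrix_semipos_ge0 Zoff Zpos) => i j; rewrite w'Z mxE.
  apply/matrixP => i j; apply/eqP; rewrite mxE eq_le ge0 // andbT.
  have /(_ i j) : mx_ge0 (- w) by apply: ge0; rewrite mulNmx wZ oppr0.
  by rewrite mxE oppr_ge0.
rewrite -row_free_unit -kermx_eq0; apply/eqP/row_matrixP => i.
by rewrite row0; apply: ker0; rewrite -row_mul mulmx_ker row0.
Qed.

End ZMatrices.

Section CollatzWielandt.
Variables (R : realType) (k : nat) (M : 'M[R]_k).
Hypothesis M_ge0 : mx_ge0 M.
Implicit Types (s t mu : R) (w y : 'rV[R]_k).

Lemma mulmx_shiftE w t j : (w *m (t%:M - M)) 0 j = t * w 0 j - (w *m M) 0 j.
Proof. by rewrite mulmxBr mul_mx_scalar !mxE. Qed.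

Lemma Zmatrix_shift t : Zmatrix (t%:M - M).
Proof. by move=> i j ij; rewrite !mxE (negbTE ij) mulr0n sub0r oppr_le0. Qed.

Lemma semipos_shift_gt mu y t :
  mx_ge0 y -> y != 0 -> mx_ge (y *m M) (mu *: y) ->
  row_semipositive (t%:M - M) -> mu < t.
Proof.
move=> y0 yn0 yM Zpos; rewrite ltNge; apply: contraNN yn0 => tmu.
have ny0 : mx_ge0 (- y).
  apply: (Zmatrix_semipos_ge0 (Zmatrix_shift t) Zpos) => i0 j.
  rewrite [i0]ord1 mulNmx mxE mulmx_shiftE opprB subr_ge0.
  by apply: le_trans (yM 0 j); rewrite mxE ler_wpM2r.
apply/eqP/matrixP => i j; apply/eqP; rewrite mxE eq_le y0 andbT.
by have := ny0 i j; rewrite mxE oppr_ge0.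
Qed.

Lemma semipos_shift_large : row_semipositive ((1 + \sum_i \sum_j M i j)%:M - M).
Proof.
exists (const_mx 1) => [i j|i0 j]; first by rewrite mxE ltr01.
rewrite [i0]ord1 mulmx_shiftE mxE mulr1 subr_gt0.
apply: le_lt_trans (_ : \sum_i \sum_j M i j < _); last by rewrite ltrDr.
rewrite mxE; apply: ler_sum => i _; rewrite mxE mul1r.
by rewrite (bigD1 j) //= lerDl sumr_ge0.
Qed.

Lemma semipos_shift_inv_gt0 t :
  row_semipositive (t%:M - M) -> mx_gt0 ((const_mx 1 : 'rV[R]_k) *m invmx (t%:M - M)).
Proof.
move=> Zpos; set w := _ *m _.
have wZ : w *m (t%:M - M) = const_mx 1.
  by rewrite mulmxKV // (Zmatrix_semipos_unit (Zmatrix_shift t) Zpos).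
have w0 : mx_ge0 w.
  by apply: (Zmatrix_semipos_ge0 (Zmatrix_shift t) Zpos) => i j; rewrite wZ mxE.
move=> i0 j; rewrite [i0]ord1 lt_def w0 andbT; apply/eqP => wj0.
have := mulmx_shiftE w t j; rewrite wZ mxE wj0 mulr0 sub0r => wMj.
by have := mulmx_ge0 w0 M_ge0 0 j; rewrite -oppr_le0 -wMj ler10.
Qed.

(* The witness for t - 1/(4b) is w = 1 (t I - M)^-1: from
   w (s I - M) = 1 - (t - s) w its mass is at most 2 b, so
   w ((t - 1/(4b)) I - M) = 1 - w/(4b) >= 1/2. *)
Lemma semipos_shift_down s t b :
  (s%:M - M) \in unitmx -> 0 < b -> \sum_i \sum_j `|invmx (s%:M - M) i j| <= b ->
  s <= t -> t < s + (4 * b)^-1 ->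
  row_semipositive (t%:M - M) -> row_semipositive ((t - (4 * b)^-1)%:M - M).
Proof.
move=> Zs_unit b0 Kb st tlt Zpos; set d := (4 * b)^-1.
have w0 := semipos_shift_inv_gt0 Zpos; set w := _ *m _ in w0.
have wZ : w *m (t%:M - M) = const_mx 1.
  by rewrite mulmxKV // (Zmatrix_semipos_unit (Zmatrix_shift t) Zpos).
have wK : w = (const_mx 1 - (t - s) *: w) *m invmx (s%:M - M).
  have <- : w *m (s%:M - M) = const_mx 1 - (t - s) *: w.
    rewrite -wZ -mul_mx_scalar -mulmxBr (raddfB (@scalar_mx R k)) opprB.
    by rewrite [_ + (_ - _)]addrC addrA subrK.
  by rewrite mulmxK.
have w_sum : \sum_i w 0 i <= 2 * b.
  apply: (fixpoint_row_sum_le _ _ wK Kb); first by rewrite subr_ge0.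
    by move=> i j; apply/ltW/w0.
  have : (t - s) * (4 * b) < 1 by rewrite -ltr_pdivlMr ?mulr_gt0 // div1r ltrBlDl.
  nra.
exists w => // i0 j; rewrite [i0]ord1 mulmx_shiftE mulrBl.
have wj : w 0 j <= 2 * b.
  apply: le_trans w_sum; rewrite (bigD1 j) //= lerDl.
  by apply: sumr_ge0 => i _; apply/ltW/w0.
have : d * w 0 j <= d * (2 * b) by rewrite ler_wpM2l // invr_ge0 mulr_ge0 ?ltW.
have -> : d * (2 * b) = 2^-1 by rewrite /d; field; rewrite gt_eqF.
have := mulmx_shiftE w t j; rewrite wZ mxE.
lra.
Qed.

Lemma collatz_wielandt_lower mu y :
  mx_ge0 y -> y != 0 -> mx_ge (y *m M) (mu *: y) ->
  exists2 t, mu <= t & (t%:M - M) \notin unitmx.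
Proof.
move=> y0 yn0 yM; set G := [set t | row_semipositive (t%:M - M)].
have G_lb : lbound G mu by move=> t /(semipos_shift_gt y0 yn0 yM)/ltW.
have G_inf : has_inf G.
  by split; [exists (1 + \sum_i \sum_j M i j); apply: semipos_shift_large | exists mu].
have G_ge_inf : lbound G (inf G) := ge_inf G_inf.2.
exists (inf G); first exact: lb_le_inf G_inf.1 G_lb.
apply/negP => Zs_unit; set b := 1 + \sum_i \sum_j `|invmx ((inf G)%:M - M) i j|.
have b0 : 0 < b by apply: ltr_wpDr => //; do 2![apply: sumr_ge0 => ? _].
have Kb : \sum_i \sum_j `|invmx ((inf G)%:M - M) i j| <= b by rewrite lerDr.
have d0 : 0 < (4 * b)^-1 by rewrite invr_gt0 mulr_gt0.
have [t Gt tlt] := inf_adherent d0 G_inf.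
have := G_ge_inf _ (semipos_shift_down Zs_unit b0 Kb (G_ge_inf _ Gt) tlt Gt).
lra.
Qed.

End CollatzWielandt.

Section SpectralRadius.
Variables (R : realType) (k : nat).
Implicit Types (M : 'M[R]_k) (l : R[i]).
Local Notation normc := (@ComplexField.Normc.normc R).

Lemma normc_ge0 (z : R[i]) : 0 <= normc z.
Proof. exact: (@normr_ge0 _ (Rcomplex R)). Qed.

Lemma normc_sum (I : finType) (F : I -> R[i]) : normc (\sum_i F i) <= \sum_i normc (F i).
Proof. exact: (@ler_norm_sum _ (Rcomplex R)). Qed.

Lemma normc_real (x : R) : normc x%:C%C = `|x|.
Proof. by rewrite /ComplexField.Normc.normc /= expr0n addr0 sqrtr_sqr. Qed.

Lemma spectrum_singular M t : (t%:M - M) \notin unitmx -> spectrum M t%:C%C.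
Proof.
move=> Mt; rewrite /spectrum /= /eigenvalue /eigenspace kermx_eq0 row_free_unit.
rewrite -map_scalar_mx -map_mxB unitmxE det_map_mx unitfE fmorph_eq0 negbK.
have -> : \det (M - t%:M) = (-1) ^+ k * \det (t%:M - M) by rewrite -detZ scaleN1r opprB.
by move: Mt; rewrite unitmxE unitfE negbK => /eqP ->; rewrite mulr0.
Qed.

Lemma spectrum_roots M : exists r : seq R[i], forall l, spectrum M l <-> l \in r.
Proof.
have [r Hr] := closed_field_poly_normal (char_poly (map_mx (real_complex R) M)).
exists r => l; rewrite /spectrum /= eigenvalue_root_char.
by rewrite Hr (monicP (char_poly_monic _)) scale1r root_prod_XsubC.
Qed.

Lemma spectral_radius_ge M l : spectrum M l -> normc l <= spectral_radius M.
Proof.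
move=> Ml; have [r Mr] := spectrum_roots M.
apply: ub_le_sup; last by exists l.
exists (\big[Num.max/0]_(z <- r) normc z) => x [l' /Mr l'r <-].
exact: le_bigmax_seq.
Qed.

Lemma spectral_radius_eq0 M : ~ (exists l, spectrum M l) -> spectral_radius M = 0.
Proof.
move=> M0; rewrite /spectral_radius (_ : [set normc l | l in spectrum M] = set0) ?sup0 //.
by apply/seteqP; split=> // x [l Ml _]; apply: M0; exists l.
Qed.

Lemma spectral_radius_le M c :
  0 <= c -> (forall l, spectrum M l -> normc l <= c) -> spectral_radius M <= c.
Proof.
move=> c0 Mc; have [[l Ml]|/spectral_radius_eq0-> //] := pselect (exists l, spectrum M l).
by apply: ge_sup; [exists (normc l), l | move=> x [l' /Mc ? <-]].
Qed.

Lemma spectral_radius_ge0 M : 0 <= spectral_radius M.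
Proof.
have [[l Ml]|/spectral_radius_eq0-> //] := pselect (exists l, spectrum M l).
exact: le_trans (normc_ge0 l) (spectral_radius_ge Ml).
Qed.

Lemma spectral_radius_lt1 M :
  (forall l, spectrum M l -> normc l < 1) -> spectral_radius M < 1.
Proof.
move=> M1; have [r Mr] := spectrum_roots M.
apply: le_lt_trans (spectral_radius_le (c := \big[Num.max/0]_(z <- r) normc z) _ _) _.
- exact: bigmax_ge_id.
- by move=> l /Mr lr; apply: le_bigmax_seq.
- by rewrite big_seq; apply: bigmax_lt => // z /Mr /M1.
Qed.

End SpectralRadius.

Section Companion.
Variables (R : realType) (k : nat).
Implicit Types (B C : 'M[R]_k) (y : 'rV[R]_k) (l : R[i]).
Local Notation normc := (@ComplexField.Normc.normc R).

Definition companion B C : 'M[R]_(k + k) := block_mx B C 1%:M 0.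

Lemma companion_ge0 B C : mx_ge0 B -> mx_ge0 C -> mx_ge0 (companion B C).
Proof.
move=> B0 C0 i j; rewrite /companion.
by case: (split_ordP i) => i' ->; case: (split_ordP j) => j' ->;
  rewrite ?block_mxEul ?block_mxEur ?block_mxEdl ?block_mxEdr ?mxE ?ler0n ?B0 ?C0.
Qed.

Lemma companion_eigen_row B C l :
  mx_ge0 B -> mx_ge0 C -> spectrum (companion B C) l ->
  exists2 y : 'rV[R]_k, mx_ge0 y /\ y != 0 &
    mx_ge (y *m (normc l *: B + C)) (normc l ^+ 2 *: y).
Proof.
move=> B0 C0 /eigenvalueP [v vT vn0].
rewrite map_block_mx map_mx1 map_mx0 -[v]hsubmxK mul_row_block mulmx1 mulmx0 addr0 in vT.
rewrite scale_row_mx in vT; case/eq_row_mx: vT => e1 e2.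
set v1 := lsubmx v in e1 e2; set v2 := rsubmx v in e1 e2.
set Bc := map_mx _ B in e1; set Cc := map_mx _ C in e2.
have v1E : v1 *m (l *: Bc + Cc) = l ^+ 2 *: v1.
  rewrite mulmxDr e2 -scalemxAr (_ : v1 *m Bc = l *: v1 - v2) ?scalerBr ?addrNK ?scalerA //.
  by rewrite -e1 addrK.
have v1n0 : v1 != 0.
  apply: contraNneq vn0 => v10; rewrite -[v]hsubmxK -/v1 -/v2 v10.
  by move: e1; rewrite v10 mul0mx add0r scaler0 => ->; rewrite row_mx0.
exists (\row_j normc (v1 0 j)); first split.
- by move=> i j; rewrite mxE normc_ge0.
- apply: contraNneq v1n0 => y0; apply/eqP/matrixP => i0 j; rewrite [i0]ord1 !mxE.
  by apply: ComplexField.Normc.eq0_normc; have /matrixP/(_ 0 j) := y0; rewrite !mxE.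
move=> i0 j; rewrite [i0]ord1.
have -> : (normc l ^+ 2 *: \row_j normc (v1 0 j)) 0 j = normc ((v1 *m (l *: Bc + Cc)) 0 j).
  by rewrite v1E !mxE !ComplexField.Normc.normcM expr2.
rewrite !mxE; apply: le_trans (normc_sum _) _.
apply: ler_sum => i _; rewrite !mxE ComplexField.Normc.normcM ler_wpM2l ?normc_ge0 //.
apply: le_trans (le_normcD _ _) _.
by rewrite ComplexField.Normc.normcM !normc_real !ger0_norm.
Qed.

Lemma companion_subinvariant B C y r :
  0 < r -> mx_ge (y *m (r *: B + C)) (r ^+ 2 *: y) ->
  mx_ge (row_mx y (r^-1 *: (y *m C)) *m companion B C)
        (r *: row_mx y (r^-1 *: (y *m C))).
Proof.
move=> r0 yBC; rewrite /companion mul_row_block mulmx1 mulmx0 addr0 scale_row_mx.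
move=> i0 j; rewrite [i0]ord1; case: (split_ordP j) => j' ->.
  rewrite !row_mxEl; set X := y *m B + _.
  have XE : y *m (r *: B + C) = r *: X.
    by rewrite scalerDr scalerA mulfV ?gt_eqF // scale1r mulmxDr scalemxAr.
  by move: (yBC 0 j'); rewrite XE expr2 -scalerA !mxE ler_pM2l.
by rewrite !row_mxEr !mxE mulrA mulfV ?gt_eqF // mul1r.
Qed.

Lemma companion_eigen_lt1 (Ah P B C : 'M[R]_k) l :
  monotone Ah -> P \in unitmx -> mx_ge0 (invmx P) -> mx_ge0 B -> mx_ge0 C ->
  invmx P *m Ah = 1%:M - B - C -> spectrum (companion B C) l -> normc l < 1.
Proof.
move=> Ah_mono Pu P0 B0 C0 PAh Tl.
have [y [y0 yn0] yBC] := companion_eigen_row B0 C0 Tl.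
rewrite ltNge; apply: contraNN yn0 => r1; set r := normc l in yBC r1.
have /(monotone_row_le0 Ah_mono) uP0 : mx_ge0 (y *m invmx P) by apply: mulmx_ge0.
rewrite -(mulmxKV Pu y) uP0 ?mul0mx // -mulmxA PAh => i0 j; rewrite [i0]ord1.
have := yBC 0 j; have := mulmx_ge0 y0 C0 0 j; have := y0 0 j.
rewrite !mulmxBr mulmx1 mulmxDr -scalemxAr.
set a := y *m B; set c := y *m C; rewrite !mxE => yj0 cj0 yBCj.
(* r^2 y <= r a + c <= r (a + c) and r y <= r^2 y give y <= a + c *)
have : r * y 0 j <= r ^+ 2 * y 0 j.
  by rewrite ler_wpM2r // expr2 ler_peMl // (le_trans ler01).
nra.
Qed.

Lemma companion_radius_le (B1 C1 B2 C2 : 'M[R]_k) :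
  mx_ge0 B1 -> mx_ge0 C1 -> mx_ge0 B2 -> mx_ge0 C2 ->
  mx_ge B1 B2 -> mx_ge (B2 + C2) (B1 + C1) ->
  (forall l, spectrum (companion B1 C1) l -> normc l < 1) ->
  spectral_radius (companion B1 C1) <= spectral_radius (companion B2 C2).
Proof.
move=> B10 C10 B20 C20 B12 BC12 T1_lt1.
apply: spectral_radius_le; first exact: spectral_radius_ge0.
move=> l T1l; have [y [y0 yn0] yBC1] := companion_eigen_row B10 C10 T1l.
have r1 := T1_lt1 l T1l; set r := normc l in r1 yBC1 *.
have [->|rn0] := eqVneq r 0; first exact: spectral_radius_ge0.
have r_gt0 : 0 < r by rewrite lt_def rn0 normc_ge0.
(* (r B1 + C1) - (r B2 + C2) <= (r - 1) (B1 - B2) <= 0 *)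
have yBC2 : mx_ge (y *m (r *: B2 + C2)) (r ^+ 2 *: y).
  move=> i j; apply: le_trans (yBC1 i j) _; rewrite !mxE; apply: ler_sum => m _.
  apply: ler_wpM2l; first exact: y0.
  have := B12 m j; have := BC12 m j; rewrite !mxE => BCmj Bmj.
  have : 0 <= (1 - r) * (B1 m j - B2 m j) by apply: mulr_ge0; rewrite subr_ge0 // ltW.
  nra.
have Y0 : mx_ge0 (row_mx y (r^-1 *: (y *m C2))).
  move=> i0 j; case: (split_ordP j) => j' ->; rewrite ?row_mxEl ?row_mxEr //.
  by rewrite mxE mulr_ge0 ?invr_ge0 ?(ltW r_gt0) ?(mulmx_ge0 y0 C20).
have Yn0 : row_mx y (r^-1 *: (y *m C2)) != 0.
  by apply: contraNneq yn0 => /eqP; rewrite -row_mx0 => /eqP/eq_row_mx[->].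
have [t rt T2t] := collatz_wielandt_lower (companion_ge0 B20 C20) Y0 Yn0
  (companion_subinvariant r_gt0 yBC2).
apply: le_trans rt _; apply: le_trans (spectral_radius_ge (spectrum_singular T2t)).
by rewrite normc_real ler_norm.
Qed.

End Companion.

Section HatSplitting.
Variables (R : realType) (n : nat) (A Pi Ri Si P3 R3 S3 : 'M[R]_n).

Definition W11 := invmx P3 *m R3 - invmx P3 *m S3 *m invmx Pi *m Ri.
Definition W12 := invmx P3 *m S3 *m invmx Pi *m Si.

Lemma W_companion : W Pi Ri Si P3 R3 S3 = companion W11 W12.
Proof. by []. Qed.

Lemma invP3_Rhat : invmx P3 *m Rhat Pi Ri R3 S3 = W11.
Proof. by rewrite /Rhat mulmxBr !mulmxA. Qed.

Hypotheses (si : double_weak_regular_splitting A Pi Ri Si)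
           (s3 : double_regular_splitting A P3 R3 S3).

Lemma invP3_Ahat : invmx P3 *m Ahat A Pi S3 = 1%:M - W11 - W12.
Proof.
have [EAi Piu _ _ _] := si; have [EA3 P3u _ _ _] := s3.
set X := invmx P3 *m S3 *m invmx Pi.
have P3A : invmx P3 *m A = 1%:M - invmx P3 *m R3 + invmx P3 *m S3.
  by rewrite {1}EA3 mulmxDr mulmxBr mulVmx.
have XA : X *m A = invmx P3 *m S3 - X *m Ri + X *m Si.
  by rewrite EAi mulmxDr mulmxBr -[X *m Pi]mulmxA mulVmx ?mulmx1.
rewrite /Ahat /W11 /W12 mulmxA mulmxBr mulmx1 mulmxA -/X mulmxBl P3A XA.
by apply/matrixP => i j; rewrite !mxE; ring.
Qed.

Lemma W11_ge0 : mx_ge0 W11.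
Proof.
have [_ _ _ PiR _] := si; have [_ _ P30 R30 S30] := s3.
move=> i j; rewrite /W11 -mulmxA mxE [X in _ + X]mxE subr_ge0.
apply: (@le_trans _ _ 0); last exact: mulmx_ge0.
by apply: mulmx_le0_ge0 => //; apply: mulmx_ge0_le0.
Qed.

Lemma W12_ge0 : mx_ge0 W12.
Proof.
have [_ _ _ _ PiS] := si; have [_ _ P30 _ S30] := s3.
by rewrite /W12 -mulmxA; apply: mulmx_le0 => //; apply: mulmx_ge0_le0.
Qed.

End HatSplitting.

Theorem corollary3p12 (R : realType) (n : nat)
    (A P1 R1 S1 P2 R2 S2 P3 R3 S3 : 'M[R]_n) :
  monotone A ->
  double_weak_regular_splitting A P1 R1 S1 ->
  double_weak_regular_splitting A P2 R2 S2 ->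
  double_regular_splitting A P3 R3 S3 ->
  ~ spectrum (S3 *m invmx P1) ((1 : R)%:C)%C ->
  ~ spectrum (S3 *m invmx P2) ((1 : R)%:C)%C ->
  monotone (Ahat A P1 S3) ->
  monotone (Ahat A P2 S3) ->
  mx_ge (invmx P3 *m Ahat A P1 S3) (invmx P3 *m Ahat A P2 S3) ->
  mx_ge (invmx P3 *m Rhat P1 R1 R3 S3) (invmx P3 *m Rhat P2 R2 R3 S3) ->
  spectral_radius (W P1 R1 S1 P3 R3 S3) <= spectral_radius (W P2 R2 S2 P3 R3 S3)
  /\ spectral_radius (W P2 R2 S2 P3 R3 S3) < 1.
Proof.
move=> _ s1 s2 s3 _ _ A1_mono A2_mono HA HR.
have [_ P3u P30 _ _] := s3.
have W_eigen_lt1 Pi Ri Si : double_weak_regular_splitting A Pi Ri Si ->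
    monotone (Ahat A Pi S3) ->
    forall l, spectrum (W Pi Ri Si P3 R3 S3) l -> ComplexField.Normc.normc l < 1.
  move=> si Ai_mono l; rewrite W_companion.
  exact: companion_eigen_lt1 Ai_mono P3u P30 (W11_ge0 si s3) (W12_ge0 si s3)
    (invP3_Ahat si s3).
split; last exact: spectral_radius_lt1 (W_eigen_lt1 _ _ _ s2 A2_mono).
rewrite !W_companion; apply: companion_radius_le (W_eigen_lt1 _ _ _ s1 A1_mono).
- exact: W11_ge0 s1 s3.
- exact: W12_ge0 s1 s3.
- exact: W11_ge0 s2 s3.
- exact: W12_ge0 s2 s3.
- by move: HR; rewrite !invP3_Rhat.
- move=> i j; move: (HA i j); rewrite (invP3_Ahat s1 s3) (invP3_Ahat s2 s3) !mxE.
  lra.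
Qed.
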